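(* Let $\lambda\in X^+$ be a $p$-core. Let $\alpha=\varepsilon_i+\varepsilon_j$ with $1\le i<j\le l(\lambda)$ and integers $a,l\ge1$ with $\langle\lambda+\rho,\alpha^\vee\rangle=a+lp$, $(\lambda+\rho)_j-a>0$ and $\chi(s_{\alpha,l}\cdot\lambda)\ne0$. Then the entries of $s_{\alpha,l}(\lambda+\rho)$ are distinct and strictly positive. Put $\mu_\alpha=\mathrm{sort}(s_{\alpha,l}(\lambda+\rho))-\rho$. Then $\mu_\alpha$ is a partition with $\mu_\alpha\subsetneq\lambda$, and $\mu_\alpha$ is conjugate to $\lambda$ under the dot action of $W_p(D_{l(\lambda)})$. Furthermore, the map $(\alpha,l)\mapsto\mu_\alpha$, defined on the set of all such pairs $(\alpha,l)$, is injective.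
   Context: Setup: $p>2$ is a prime, $m\ge1$, weight lattice $X=\mathbb Z^m$ of $\mathrm{Sp}_{2m}$ with standard basis $\varepsilon_i$, standard inner product, $\alpha^\vee=2\alpha/\langle\alpha,\alpha\rangle$. $X^+=\{\lambda\in\mathbb Z^m:\lambda_1\ge\dots\ge\lambda_m\ge0\}$ (partitions with at most $m$ parts); $l(\lambda)$ is the number of nonzero entries. $\rho=(m,m-1,\dots,1)$. $s_{\alpha,l}(x)=x-(\langle x,\alpha^\vee\rangle-lp)\alpha$, $w\cdot x=w(x+\rho)-\rho$. $\chi(\mu)$ is the Weyl character; $\chi(\mu)=0$ iff some entry of $\mu+\rho$ is $0$ or two entries are equal up to sign. A $p$-core is $\lambda\in X^+$ such that for all $i$ and all integers $l\ge1$ with $(\lambda+\rho)_i-lp>0$, the number $(\lambda+\rho)_i-lp$ occurs as an entry of $\lambda+\rho$. $\mathrm{sort}(\mu)$ is the weakly decreasing rearrangement of $\mu\in\mathbb Z^m$; $\mu\subseteq\nu$ means $\mu_i\le\nu_i$ for all $i$. For $1\le t\le m$, $W_p(D_t)$ is the group of affine transformations of $\mathbb R^m$ generated by the $s_{\alpha,l}$ with $\alpha=\varepsilon_i\pm\varepsilon_j$, $1\le i<j\le t$, $l\in\mathbb Z$. *)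

(* Weights of Sp_{2m}: X = Z^m, represented as {ffun 'I_m -> int}.
   Indices are 0-based: the paper's epsilon_{k} (1 <= k <= m) is index k-1. *)
From HB Require Import structures.
From mathcomp Require Import all_boot all_order all_algebra.
Set Implicit Arguments. Unset Strict Implicit. Unset Printing Implicit Defensive.
Import Order.TTheory GRing.Theory Num.Theory.
Local Open Scope ring_scope.

Definition weight (m : nat) := {ffun 'I_m -> int}.

Definition addw m (x y : weight m) : weight m := [ffun k => x k + y k].
Definition subw m (x y : weight m) : weight m := [ffun k => x k - y k].

Definition rho m : weight m := [ffun k : 'I_m => ((m - k)%N)%:Z].

Definition dotp m (x y : weight m) : int := \sum_(k < m) x k * y k.

Definition dominant m (x : weight m) : Prop :=
  (forall k, 0 <= x k) /\ (forall k k' : 'I_m, (k <= k')%N -> x k' <= x k).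

Definition len m (x : weight m) : nat := #|[set k | x k != 0]|.

Definition p_core (p : nat) m (lam : weight m) : Prop :=
  dominant lam /\
  forall (k : 'I_m) (l : int), 1 <= l ->
    0 < addw lam (rho m) k - l * p%:Z ->
    exists k' : 'I_m, addw lam (rho m) k' = addw lam (rho m) k - l * p%:Z.

Definition sgn (neg : bool) : int := if neg then -1 else 1.
Definition root m (i j : 'I_m) (neg : bool) : weight m :=
  [ffun k => ((k == i)%:R + sgn neg * (k == j)%:R)].

(* affine reflection s_{alpha,l}(x) = x - (<x, alpha^v> - l p) alpha.
   For the roots eps_i +- eps_j (i <> j) one has <alpha,alpha> = 2, so alpha^v = alpha. *)
Definition s_aff (p : nat) m (i j : 'I_m) (neg : bool) (l : int) (x : weight m)
  : weight m :=
  let a := root i j neg in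
  [ffun k => x k - (dotp x a - l * p%:Z) * a k].

Definition dot_act m (w : weight m -> weight m) (x : weight m) : weight m :=
  subw (w (addw x (rho m))) (rho m).

(* Weyl character vanishing: chi(mu) = 0 iff some entry of mu+rho is 0 or two
   entries (at distinct positions) are equal up to sign. *)
Definition weyl_char_zero m (mu : weight m) : Prop :=
  let x := addw mu (rho m) in
  (exists k, x k = 0) \/
  (exists k k' : 'I_m, k != k' /\ (x k = x k' \/ x k = - x k')).

Definition sortw m (x : weight m) : weight m :=
  [ffun k : 'I_m => nth 0 (sort (fun a b : int => b <= a) (codom x)) k].

Definition subw_le m (mu nu : weight m) : Prop := forall k, mu k <= nu k.

(* Generators of W_p(D_t): s_{alpha,l}, alpha = eps_i +- eps_j, 1 <= i < j <= t, l in Z.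
   A generator is encoded as (i, j, neg, l). *)
Definition gen_data m := ('I_m * 'I_m * bool * int)%type.
Definition is_gen_D m (t : nat) (g : gen_data m) : bool :=
  (g.1.1.1 < g.1.1.2 < t)%N.
Definition gen_act (p : nat) m (g : gen_data m) : weight m -> weight m :=
  s_aff p g.1.1.1 g.1.1.2 g.1.2 g.2.
Definition word_act (p : nat) m (w : seq (gen_data m)) (x : weight m) : weight m :=
  foldr (fun g y => gen_act p g y) x w.

Definition WpD_dot_conj (p : nat) m (t : nat) (lam mu : weight m) : Prop :=
  exists w : seq (gen_data m),
    all (is_gen_D t) w /\ dot_act (word_act p w) lam = mu.

Definition admissible (p : nat) m (lam : weight m) (i j : 'I_m) (a l : int) : Prop :=
  let x := addw lam (rho m) in
  [/\ (i < j)%N, (j < len lam)%N, 1 <= a & 1 <= l] /\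
  [/\ dotp x (root i j false) = a + l * p%:Z,
      0 < x j - a
    & ~ weyl_char_zero (dot_act (s_aff p i j false l) lam)].

Definition mu_alpha (p : nat) m (lam : weight m) (i j : 'I_m) (l : int) : weight m :=
  subw (sortw (s_aff p i j false l (addw lam (rho m)))) (rho m).

From Pilot Require Import Defs.
From mathcomp Require Import all_boot all_order all_algebra zify.
Import Order.TTheory GRing.Theory Num.Theory.
Local Open Scope ring_scope.

(* Write x = lam + rho.  For an admissible pair (alpha = eps_i + eps_j, l) with
   <x, alpha> = a + l p, the reflected weight y = s_{alpha,l}(x) is x with the
   two entries x_i, x_j lowered by a ([lower_pair]).  The proof has three parts.
   - Sorting: for an injective weight y, sort(y) is strictly decreasing, hence
     sort(y) - rho is dominant as soon as y > 0; and if y <= x entrywise with x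
     nonincreasing then sort(y) <= x entrywise (a counting argument).
   - Conjugacy: sort(y) is reached from y by transpositions s_{eps_k - eps_t, 0}
     with k < t < l(lam), because y already agrees with sort(y) = rho beyond
     l(lam); prepending s_{alpha,l} gives an element of W_p(D_{l(lam)}).
   - Injectivity: the multiset of entries of y determines (i, j, a): the sum of
     the entries gives a, the entry x_i of x is missing from y (which pins down
     i), and the value x_j - a then gives j; finally l is read off <x, alpha>. *)

Definition ge_int : rel int := fun a b => b <= a.

Lemma ge_int_trans : transitive ge_int.
Proof. by move=> b a c h1 h2; apply: le_trans h2 h1. Qed.

Lemma ge_int_total : total ge_int.
Proof. by move=> a b; rewrite /ge_int orbC le_total. Qed.

Section Sorting.
Context {m : nat}.

Definition sdecr (f : 'I_m -> int) : Prop :=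
  forall k k' : 'I_m, (k < k')%N -> f k' < f k.

Lemma codom_sortw (y : weight m) : codom (sortw y) = sort ge_int (codom y).
Proof.
rewrite codomE; under eq_map => k do rewrite ffunE.
rewrite (map_comp (nth 0 _) val) val_enum_ord.
by rewrite -[RHS](mkseq_nth 0) size_sort size_codom card_ord.
Qed.

Lemma perm_codom_sortw (y : weight m) : perm_eq (codom (sortw y)) (codom y).
Proof. by rewrite codom_sortw perm_sort. Qed.

Lemma perm_codom_range {y y' : weight m} :
  perm_eq (codom y) (codom y') -> forall k, exists k', y k = y' k'.
Proof.
move=> /perm_mem e k; have : y k \in codom y' by rewrite -e codom_f.
by case/codomP=> k' ->; exists k'.
Qed.

Lemma sortw_in_range (y : weight m) k : exists k', sortw y k = y k'.
Proof. exact: perm_codom_range (perm_codom_sortw y) k. Qed.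

Lemma sortw_perm_eq {y y' : weight m} : sortw y = sortw y' -> perm_eq (codom y) (codom y').
Proof.
move=> e; rewrite -(permPl (perm_codom_sortw y)) e.
exact: perm_codom_sortw.
Qed.

Lemma sum_codom (y : weight m) : \sum_(v <- codom y) v = \sum_k y k.
Proof. by rewrite codomE big_map big_enum. Qed.

Lemma sdecr_inj {f : 'I_m -> int} : sdecr f -> injective f.
Proof.
move=> hf k k' e; apply/val_inj; case: (ltngtP k k') => // /hf; by rewrite e ltxx.
Qed.

Lemma sortw_sdecr {y : weight m} : injective y -> sdecr (sortw y).
Proof.
move=> hy k k' hkk; set s := sort ge_int (codom y).
have hs : size s = m by rewrite size_sort size_codom card_ord.
have us : uniq s by rewrite sort_uniq codomE map_inj_uniq // enum_uniq.
have := sorted_ltn_nth ge_int_trans 0 (sort_sorted ge_int_total (codom y)).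
move=> /(_ k k'); rewrite !inE -/s hs !ltn_ord => /(_ isT isT hkk) hle.
rewrite !ffunE lt_neqAle [_ <= _]hle andbT nth_uniq ?hs //.
by rewrite neq_ltn hkk orbT.
Qed.

Lemma sdecr_gap {f : 'I_m -> int} {k k' : 'I_m} : sdecr f ->
  (k <= k')%N -> f k' + ((k' - k)%N)%:Z <= f k.
Proof.
move=> hf hkk; suff H : forall d (q q' : 'I_m), q' = (q + d)%N :> nat -> f q' + d%:Z <= f q.
  by apply: H; rewrite subnKC.
elim=> [|d IH] q q' e.
  by rewrite addr0; have -> : q' = q by apply/val_inj; rewrite /= e addn0.
have hd : (q + d < m)%N by have := ltn_ord q'; lia.
have hstep : f q' < f (Ordinal hd) by apply: hf; rewrite /= e addnS.
have := IH q (Ordinal hd) erefl; lia.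
Qed.

Lemma sdecr_nonincr {f : 'I_m -> int} {k k' : 'I_m} : sdecr f -> (k <= k')%N -> f k' <= f k.
Proof.
move=> hf; rewrite leq_eqVlt => /orP [/eqP e|/hf /ltW //].
by have -> : k' = k by apply/val_inj.
Qed.

Lemma sdecr_pos_lb {f : 'I_m -> int} : sdecr f -> (forall k, 0 < f k) ->
  forall k : 'I_m, ((m - k)%N)%:Z <= f k.
Proof.
move=> hf hpos k; have hlast : (m.-1 < m)%N by have := ltn_ord k; lia.
have hk : (k <= Ordinal hlast)%N by have := ltn_ord k; rewrite /=; lia.
have := sdecr_gap hf hk; have := hpos (Ordinal hlast); rewrite /=.
have := ltn_ord k; lia.
Qed.

Lemma dominant_sub_rho {f : weight m} : sdecr f -> (forall k, 0 < f k) ->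
  dominant (subw f (rho m)).
Proof.
move=> hf hpos; split=> [k|k k' hkk]; rewrite /subw /rho !ffunE.
  by have := sdecr_pos_lb hf hpos k; lia.
by have := sdecr_gap hf hkk; have := ltn_ord k'; lia.
Qed.

Lemma count_ge_nth {s : seq int} {k : nat} : sorted ge_int s -> (k < size s)%N ->
  (k.+1 <= count (fun u => (nth 0 s k <= u)%R) s)%N.
Proof.
move=> hs hk; set v := nth 0 s k.
rewrite -[in X in (_ <= X)%N](cat_take_drop k.+1 s) count_cat.
have htake : size (take k.+1 s) = k.+1 by rewrite size_take; case: ltnP; lia.
have : all (fun u => v <= u) (take k.+1 s).
  apply/(all_nthP 0) => q; rewrite htake => hq; rewrite nth_take //.
  have := sorted_leq_nth ge_int_trans (fun u : int => lexx u) 0 hs.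
  by move=> /(_ q k); rewrite !inE hk; apply=> //; apply: leq_ltn_trans hk.
by rewrite all_count htake => /eqP ->; apply: leq_addr.
Qed.

Lemma count_ord_lt k : (k <= m)%N -> count (fun q : 'I_m => (q < k)%N) (enum 'I_m) = k.
Proof.
move=> hk; rewrite -(count_map val (fun n => n < k)%N) val_enum_ord.
by rewrite -size_filter -[k]add0n filter_iota_ltn // size_iota.
Qed.

(* Majorization: if y <= x entrywise and x is nonincreasing, then
   sort(y) <= x entrywise.  Otherwise at least k + 1 indices q would have
   x q >= y q >= sort(y)_k > x k, forcing them all below k. *)
Lemma sortw_majorized (y x : weight m) : (forall q, y q <= x q) ->
  (forall q q' : 'I_m, (q <= q')%N -> x q' <= x q) -> forall k, sortw y k <= x k.
Proof.
move=> hyx hx k; set v := sortw y k.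
have hcount : (k.+1 <= count (fun q => (v <= y q)%R) (enum 'I_m))%N.
  have -> : count (fun q => (v <= y q)%R) (enum 'I_m) = count (fun u => v <= u) (codom y).
    by rewrite [in RHS]codomE [in RHS]count_map.
  rewrite -(count_sort ge_int) /v ffunE.
  apply: (count_ge_nth (s := sort ge_int (codom y))); first exact: (sort_sorted ge_int_total).
  by rewrite size_sort size_codom card_ord.
rewrite leNgt; apply/negP => hlt.
have hsmall : (count (fun q => (v <= y q)%R) (enum 'I_m) <=
               count (fun q : 'I_m => (q < k)%N) (enum 'I_m))%N.
  apply: sub_count => q /= hq; rewrite ltnNge; apply/negP => /hx.
  by have := hyx q; lia.
by have := leq_trans hcount hsmall; rewrite count_ord_lt ?ltnn // ltnW.
Qed.
End Sorting.

Section ShiftedWeights.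
Context {m : nat}.

Lemma addw_rhoE (lam : weight m) k : addw lam (rho m) k = lam k + ((m - k)%N)%:Z.
Proof. by rewrite /addw /rho !ffunE. Qed.

Lemma subw_rhoE (f : weight m) k : subw f (rho m) k = f k - ((m - k)%N)%:Z.
Proof. by rewrite /subw /rho !ffunE. Qed.

Lemma addw_subwK (u r : weight m) : addw (subw u r) r = u.
Proof. by apply/ffunP => k; rewrite !ffunE subrK. Qed.

Lemma shifted_sdecr {lam : weight m} : dominant lam -> sdecr (addw lam (rho m)).
Proof.
case=> _ hdec k k' hkk; rewrite !addw_rhoE.
by have := hdec k k' (ltnW hkk); have := ltn_ord k'; lia.
Qed.

Lemma shifted_pos {lam : weight m} : dominant lam -> forall k, 0 < addw lam (rho m) k.
Proof. by case=> hnn _ k; rewrite addw_rhoE; have := hnn k; have := ltn_ord k; lia. Qed.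

Lemma len_zero {lam : weight m} : dominant lam ->
  forall k : 'I_m, (len lam <= k)%N -> lam k = 0.
Proof.
case=> hnn hdec k hk; apply/eqP; apply: contraTT hk => hnz; rewrite -ltnNge.
have hkm : (k < m)%N := ltn_ord k.
have hsub : [set widen_ord hkm q | q : 'I_k.+1] \subset [set q | lam q != 0].
  apply/subsetP => _ /imsetP [q _ ->]; rewrite inE.
  by have := hdec (widen_ord hkm q) k (ltn_ord q); have := hnn k; move: hnz; lia.
have hinj : injective (widen_ord hkm) by move=> q q' e; apply/val_inj; exact: (congr1 val e).
by have := subset_leq_card hsub; rewrite card_imset // card_ord.
Qed.
End ShiftedWeights.

Section Transpositions.
Context {m : nat}.

Lemma sum_indicator (z : 'I_m -> int) (k : 'I_m) : \sum_q z q * (q == k)%:R = z k.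
Proof. by rewrite (bigD1 k) //= eqxx mulr1 big1 ?addr0 // => q /negbTE ->; rewrite mulr0. Qed.

Lemma dotp_root (z : weight m) i j neg : dotp z (Defs.root i j neg) = z i + sgn neg * z j.
Proof.
rewrite /dotp; under eq_bigr => q _ do rewrite ffunE mulrDr mulrCA.
by rewrite big_split /= -mulr_sumr !sum_indicator.
Qed.

Lemma swap_act p (z : weight m) (k t q : 'I_m) : k != t ->
  s_aff p k t true 0 z q = if q == k then z t else if q == t then z k else z q.
Proof.
move=> hkt; rewrite /s_aff ffunE dotp_root ffunE /sgn mul0r subr0.
case: (eqVneq q k) => [->|hqk] /=; first by rewrite (negbTE hkt) /=; lia.
by case: (eqVneq q t) => [->|hqt] /=; lia.
Qed.
End Transpositions.

Section SortingBySwaps.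
Context {m : nat} (p T : nat).

Lemma word_act_cat (w1 w2 : seq (gen_data m)) z :
  word_act p (w1 ++ w2) z = word_act p w1 (word_act p w2 z).
Proof. by rewrite /word_act foldr_cat. Qed.

Lemma swap_into_place {z z' : weight m} (t : 'I_m) : (t < T)%N -> injective z' ->
  (forall k : 'I_m, (t < k)%N -> z k = z' k) -> (forall k, exists k', z' k = z k') ->
  exists w, [/\ all (is_gen_D T) w,
    forall k : 'I_m, (t <= k)%N -> word_act p w z k = z' k
    & forall k, exists k', z' k = word_act p w z k'].
Proof.
move=> htT hz' hagree hrange; have [s hs] := hrange t.
case: (ltngtP s t) => hst.
- have hne : s != t by rewrite neq_ltn hst.
  exists [:: (s, t, true, 0)]; split=> /=.
  + by rewrite andbT /is_gen_D /= hst.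
  + move=> k htk; rewrite /gen_act /= swap_act //.
    case: eqVneq => [eks|hks]; first by move: htk; rewrite eks leqNgt hst.
    case: eqVneq => [-> //|hkt]; apply: hagree.
    by move: hkt; rewrite -(inj_eq val_inj) /=; lia.
  + move=> k; have [k' ->] := hrange k; rewrite /gen_act /=.
    case: (eqVneq k' s) => [->|hks].
      by exists t; rewrite swap_act // eqxx eq_sym (negbTE hne).
    case: (eqVneq k' t) => [->|hkt]; first by exists s; rewrite swap_act // eqxx.
    by exists k'; rewrite swap_act // (negbTE hks) (negbTE hkt).
- by have := hagree _ hst; rewrite -hs => /hz' hts; move: hst; rewrite hts ltnn.
- have est : s = t by apply/val_inj.
  exists [::]; split=> // k; rewrite leq_eqVlt => /orP [/eqP htk|/hagree //].
  have -> : k = t by apply/val_inj.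
  by rewrite hs est.
Qed.

Lemma sort_by_swaps {z z' : weight m} : injective z' ->
  (forall k : 'I_m, (T <= k)%N -> z k = z' k) -> (forall k, exists k', z' k = z k') ->
  exists w, all (is_gen_D T) w /\ word_act p w z = z'.
Proof.
move=> hz'; suff H : forall t, (t <= T)%N -> forall z : weight m,
    (forall k : 'I_m, (t <= k)%N -> z k = z' k) -> (forall k, exists k', z' k = z k') ->
    exists w, all (is_gen_D T) w /\ word_act p w z = z'.
  exact: H.
elim=> [|t IH] htT {}z hagree hrange.
  by exists [::]; split=> //; apply/ffunP => k; apply: hagree.
case: (ltnP t m) => htm; last first.
  by apply: IH (ltnW htT) _ _ hrange => k; have := ltn_ord k; lia.
have [w1 [hw1 hagree1 hrange1]] := swap_into_place (Ordinal htm) htT hz' hagree hrange.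
have [w2 [hw2 <-]] := IH (ltnW htT) _ hagree1 hrange1.
by exists (w2 ++ w1); rewrite all_cat hw1 hw2 word_act_cat.
Qed.
End SortingBySwaps.

Section LoweringTwoEntries.
Context {m : nat}.

Definition lower_pair (x : weight m) (i j : 'I_m) (a : int) : weight m :=
  [ffun k => x k - a * Defs.root i j false k].

Lemma s_aff_lower_pair p i j l (x : weight m) :
  s_aff p i j false l x = lower_pair x i j (dotp x (Defs.root i j false) - l * p%:Z).
Proof. by []. Qed.

Lemma lower_pair_le (x : weight m) i j a k : 0 <= a -> lower_pair x i j a k <= x k.
Proof. by move=> ha; rewrite !ffunE /sgn; case: (k == i); case: (k == j) => /=; lia. Qed.

Variables (x : weight m) (i j : 'I_m) (a : int).
Hypothesis hij : i != j.

Lemma lower_pair_fst : lower_pair x i j a i = x i - a.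
Proof. by rewrite !ffunE eqxx (negbTE hij) /sgn; lia. Qed.

Lemma lower_pair_snd : lower_pair x i j a j = x j - a.
Proof. by rewrite !ffunE eqxx eq_sym (negbTE hij) /sgn; lia. Qed.

Lemma lower_pair_other k : k != i -> k != j -> lower_pair x i j a k = x k.
Proof. by move=> /negbTE hki /negbTE hkj; rewrite !ffunE hki hkj /sgn; lia. Qed.

Lemma sum_lower_pair : \sum_k lower_pair x i j a k = \sum_k x k - a *+ 2.
Proof.
under eq_bigr => k _ do rewrite ffunE ffunE /sgn mul1r mulrDr.
by rewrite sumrB big_split /= !(sum_indicator (fun=> a)) mulr2n.
Qed.
End LoweringTwoEntries.

Section LowerPairDetermined.
Context {m : nat} {x : weight m}.
Hypothesis hx : sdecr x.

Lemma lower_pair_misses {i j : 'I_m} {a : int} : (i < j)%N -> 0 < a ->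
  forall k, lower_pair x i j a k != x i.
Proof.
move=> hij ha k; have hne : i != j by rewrite neq_ltn hij.
have hxij := hx _ _ hij.
case: (eqVneq k i) => [->|hki]; first by rewrite lower_pair_fst //; lia.
case: (eqVneq k j) => [->|hkj]; first by rewrite lower_pair_snd //; lia.
by rewrite lower_pair_other //; apply: contra hki => /eqP /(sdecr_inj hx) ->.
Qed.

Lemma lower_pair_fst_mem {i j i' j' : 'I_m} {a a' : int} : (i < j)%N -> 0 < a -> i' != j' ->
  (forall k, exists k', lower_pair x i' j' a' k = lower_pair x i j a k') ->
  (i == i') || (i == j').
Proof.
move=> hij ha hne' hrange; apply/negPn/negP; rewrite negb_or => /andP [hii' hij'].
have [k e] := hrange i; have := lower_pair_misses hij ha k.
by rewrite -e lower_pair_other // eqxx.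
Qed.

Lemma lower_pair_determined {i j i' j' : 'I_m} {a a' : int} :
  (i < j)%N -> (i' < j')%N -> 0 < a -> 0 < a' ->
  injective (lower_pair x i j a) ->
  perm_eq (codom (lower_pair x i j a)) (codom (lower_pair x i' j' a')) ->
  [/\ i = i', j = j' & a = a'].
Proof.
move=> hij hij' ha ha' hy hperm.
have hne : i != j by rewrite neq_ltn hij.
have hne' : i' != j' by rewrite neq_ltn hij'.
have haa : a = a'.
  have : \sum_(v <- codom (lower_pair x i j a)) v =
         \sum_(v <- codom (lower_pair x i' j' a')) v := perm_big _ hperm.
  by rewrite !sum_codom !sum_lower_pair //; lia.
subst a'.
have hrange := perm_codom_range hperm.
have hrange' : forall k, exists k', lower_pair x i' j' a k = lower_pair x i j a k'.
  by apply: perm_codom_range; rewrite perm_sym.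
have hii : i = i'.
  have := lower_pair_fst_mem hij' ha hne hrange.
  have := lower_pair_fst_mem hij ha hne' hrange'.
  case/orP=> [/eqP -> //|/eqP eij']; case/orP=> [/eqP -> //|/eqP ei'j].
  by exfalso; move: hij hij'; rewrite eij' ei'j; lia.
subst i'; split=> //.
have [k e] := hrange j; rewrite lower_pair_snd // in e.
case: (eqVneq k i) => [eki|hki].
  move: e; rewrite eki lower_pair_fst // => /addIr /(sdecr_inj hx) eji.
  by move: hne; rewrite eji eqxx.
case: (eqVneq k j') => [ekj'|hkj'].
  by move: e; rewrite ekj' lower_pair_snd // => /addIr /(sdecr_inj hx).
rewrite lower_pair_other // in e.
have hkj : k != j by apply/eqP => ekj; move: e; rewrite ekj; lia.
have ejk : j = k by apply: hy; rewrite lower_pair_snd // lower_pair_other.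
by move: hkj; rewrite ejk eqxx.
Qed.
End LowerPairDetermined.

Section AdmissiblePairs.
Context {p m : nat} {lam : weight m}.
Hypothesis hlam : dominant lam.

Local Notation x := (addw lam (rho m)).
Local Notation reflected i j l := (s_aff p i j false l (addw lam (rho m))).

Lemma admissible_lower_pair {i j : 'I_m} {a l : int} : admissible p lam i j a l ->
  reflected i j l = lower_pair x i j a.
Proof. by case=> _ [hdot _ _]; rewrite s_aff_lower_pair hdot addrK. Qed.

(* chi(s_{alpha,l} . lam) <> 0 means in particular that y has distinct entries. *)
Lemma admissible_injective {i j : 'I_m} {a l : int} : admissible p lam i j a l ->
  injective (reflected i j l).
Proof.
case=> _ [_ _ hchi] k k' e; apply/eqP; apply/negPn/negP => hkk.
by apply: hchi; right; exists k, k'; split=> //; left; rewrite /dot_act addw_subwK.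
Qed.

(* The entries of y are positive: x_j - a > 0 by admissibility. *)
Lemma admissible_pos {i j : 'I_m} {a l : int} : admissible p lam i j a l ->
  forall k, 0 < reflected i j l k.
Proof.
move=> hadm k; rewrite (admissible_lower_pair hadm).
case: hadm => [[hij _ _ _] [_ hxj _]]; have hne : i != j by rewrite neq_ltn hij.
have hxij := shifted_sdecr hlam i j hij.
case: (eqVneq k i) => [->|hki]; first by rewrite lower_pair_fst //; lia.
case: (eqVneq k j) => [->|hkj]; first by rewrite lower_pair_snd.
by rewrite lower_pair_other // shifted_pos.
Qed.

(* sort(y) <= x entrywise, by majorization since y <= x. *)
Lemma sortw_refl_le {i j : 'I_m} {a l : int} : admissible p lam i j a l ->
  forall k, sortw (reflected i j l) k <= x k.
Proof.
move=> hadm; apply: sortw_majorized => [q|q q'].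
  by rewrite (admissible_lower_pair hadm) lower_pair_le //; case: hadm => [[_ _ ha _] _]; lia.
exact: sdecr_nonincr (shifted_sdecr hlam).
Qed.

Lemma sortw_refl_pos {i j : 'I_m} {a l : int} : admissible p lam i j a l ->
  forall k, 0 < sortw (reflected i j l) k.
Proof.
by move=> hadm k; have [k' ->] := sortw_in_range (reflected i j l) k; apply: admissible_pos hadm k'.
Qed.

Lemma mu_alpha_dominant {i j : 'I_m} {a l : int} : admissible p lam i j a l ->
  dominant (mu_alpha p lam i j l).
Proof.
move=> hadm; apply: dominant_sub_rho (sortw_refl_pos hadm).
exact: sortw_sdecr (admissible_injective hadm).
Qed.

(* mu_alpha is contained in lam, since sort(y) <= x. *)
Lemma mu_alpha_subset {i j : 'I_m} {a l : int} : admissible p lam i j a l ->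
  subw_le (mu_alpha p lam i j l) lam.
Proof.
by move=> hadm k; have := sortw_refl_le hadm k; rewrite subw_rhoE addw_rhoE; lia.
Qed.

(* mu_alpha <> lam since x_i is missing from y, hence from sort(y). *)
Lemma mu_alpha_neq {i j : 'I_m} {a l : int} : admissible p lam i j a l ->
  mu_alpha p lam i j l <> lam.
Proof.
move=> hadm e; case: (hadm) => [[hij _ ha _] _]; have ha0 : 0 < a by lia.
have hsort : sortw (reflected i j l) i = x i.
  by have := congr1 (fun f : weight m => f i) e; rewrite /= subw_rhoE addw_rhoE; lia.
have [k hk] := sortw_in_range (reflected i j l) i.
have := lower_pair_misses (shifted_sdecr hlam) hij ha0 k.
by rewrite -(admissible_lower_pair hadm) -hk hsort eqxx.
Qed.

(* sort(y) is reached from y by transpositions below l(lam), since beyond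
   l(lam) the entries of y are m - k and already sorted; then s_{alpha,l}
   followed by these transpositions maps lam to mu_alpha under the dot action. *)
Lemma mu_alpha_conj {i j : 'I_m} {a l : int} : admissible p lam i j a l ->
  WpD_dot_conj p (len lam) lam (mu_alpha p lam i j l).
Proof.
move=> hadm; case: (hadm) => [[hij hjl _ _] _]; have hne : i != j by rewrite neq_ltn hij.
set y := reflected i j l; have hyinj := admissible_injective hadm.
have hfix : forall k : 'I_m, (len lam <= k)%N -> y k = sortw y k.
  move=> k hk; have hjk : (j < k)%N := leq_trans hjl hk.
  have hki : k != i by rewrite neq_ltn (ltn_trans hij hjk) orbT.
  have hkj : k != j by rewrite neq_ltn hjk orbT.
  have := sortw_refl_le hadm k.
  have := sdecr_pos_lb (sortw_sdecr hyinj) (sortw_refl_pos hadm) k.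
  rewrite /y (admissible_lower_pair hadm) lower_pair_other //.
  by rewrite addw_rhoE (len_zero hlam k hk) add0r; lia.
have [w [hw hword]] := sort_by_swaps p (len lam) (sdecr_inj (sortw_sdecr hyinj)) hfix
  (sortw_in_range y).
exists (w ++ [:: (i, j, false, l)]); split; first by rewrite all_cat hw /= /is_gen_D /= hij hjl.
by rewrite /dot_act word_act_cat hword.
Qed.

(* (alpha, l) is recovered from mu_alpha via the multiset of entries of y. *)
Lemma mu_alpha_inj {i j i' j' : 'I_m} {a l a' l' : int} : (0 < p)%N ->
  admissible p lam i j a l -> admissible p lam i' j' a' l' ->
  mu_alpha p lam i j l = mu_alpha p lam i' j' l' -> [/\ i = i', j = j' & l = l'].
Proof.
move=> hp hadm hadm' e.
have hsort : sortw (reflected i j l) = sortw (reflected i' j' l').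
  apply/ffunP => k; have := congr1 (fun f : weight m => f k) e.
  by rewrite /= /mu_alpha !subw_rhoE; lia.
have := sortw_perm_eq hsort; have := admissible_injective hadm.
rewrite (admissible_lower_pair hadm) (admissible_lower_pair hadm').
case: hadm hadm' => [[hij _ ha _] [hdot _ _]] [[hij' _ ha' _] [hdot' _ _]] hinj.
have ha0 : 0 < a by lia.
have ha0' : 0 < a' by lia.
case/(lower_pair_determined (shifted_sdecr hlam) hij hij' ha0 ha0' hinj) => ei ej ea.
subst i' j' a'; split=> //; apply: (mulIf (_ : p%:Z != 0)); first by lia.
by move: hdot'; rewrite hdot => /addrI.
Qed.
End AdmissiblePairs.

Theorem lemma2p3 (p m : nat) (hp : prime p) (hp2 : (2 < p)%N) (hm : (1 <= m)%N)
  (lam : weight m) (hlam : dominant lam) (hcore : p_core p lam) :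
  (forall (i j : 'I_m) (a l : int), admissible p lam i j a l ->
     let y := s_aff p i j false l (addw lam (rho m)) in
     [/\ injective y & (forall k, 0 < y k)] /\
     [/\ dominant (mu_alpha p lam i j l),
         subw_le (mu_alpha p lam i j l) lam,
         mu_alpha p lam i j l <> lam
       & WpD_dot_conj p (len lam) lam (mu_alpha p lam i j l)]) /\
  (forall (i j i' j' : 'I_m) (a l a' l' : int),
     admissible p lam i j a l -> admissible p lam i' j' a' l' ->
     mu_alpha p lam i j l = mu_alpha p lam i' j' l' ->
     [/\ i = i', j = j' & l = l']).
Proof.
split=> [i j a l hadm y | i j i' j' a l a' l'].
  split; first split.
  - exact (admissible_injective hadm).
  - exact (admissible_pos hlam hadm).
  split.
  - exact (mu_alpha_dominant hlam hadm).
  - exact (mu_alpha_subset hlam hadm).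
  - exact (mu_alpha_neq hlam hadm).
  - exact (mu_alpha_conj hlam hadm).
exact (mu_alpha_inj hlam (prime_gt0 hp)).
Qed.
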